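(* Let $V,K,L$ be positive integers, $\boldsymbol\epsilon\in[0,1]^V$, and let $V_1,\dots,V_L$ be pairwise disjoint finite sets of rays (ray $j$ ''belongs to position $l$'' if $j\in V_l$), each with $|V_l|\ge K$; each ray $j$ has a vector $\mathbf p_j=(p_{ij})_{i=1}^V\in[0,1]^V$. Run the multi-position greedy algorithm: $\mathbf b^0=\boldsymbol\epsilon$, $A_0=V_1\cup\dots\cup V_L$, $J_l=\emptyset$ for all $l$; at iteration $t=1,2,\dots$ (while $A_{t-1}\neq\emptyset$) choose $j_t\in\arg\min_{j\in A_{t-1}}\sum_i b^{t-1}_i p_{ij}$, let $l_t$ be its position, add $j_t$ to $J_{l_t}$, set $\mathbf b^t=\mathbf b^{t-1}\odot\mathbf p_{j_t}$, and set $A_t=A_{t-1}\setminus\{j_t\}$, except that if $|J_{l_t}|=K$ then $A_t=A_{t-1}\setminus V_{l_t}$ (position $l_t$ is closed). This runs exactly $LK$ iterations. Let $f^t=\sum_i b_i^t$ and $E=\sum_i\epsilon_i$. Suppose real numbers $\overline{\mathrm{OPT}}_0\le\overline{\mathrm{OPT}}_1\le\dots\le\overline{\mathrm{OPT}}_{L-1}$ are such that for every $t\in\{0,\dots,LK-1\}$ the set $A_t$ contains a nonempty subset $S$ with $|S|\le LK$ and $\sum_{i=1}^V\prod_{j\in S}p_{ij}\le \overline{\mathrm{OPT}}_{\lfloor t/K\rfloor}$. Then $$f^{LK}\le \frac{E}{e}+\sum_{u=0}^{L-1}\gamma_u\,\overline{\mathrm{OPT}}_u,\qquad \gamma_u=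\Big(1-e^{-1/L}\Big)\Big(e^{-1/L}\Big)^{L-1-u}.$$
   Context: $\odot$ denotes coordinatewise product; $e$ is Euler's number. The quantity $\overline{\mathrm{OPT}}_u$ plays the role of the optimum cost still achievable with available rays after $u$ positions have been closed; at most $\lfloor t/K\rfloor$ positions are closed after $t$ iterations. *)

From Stdlib Require Import Reals Lra Lia Arith List.
Import ListNotations.
Open Scope R_scope.

Fixpoint sumR (n : nat) (f : nat -> R) : R :=
  match n with
  | O => 0
  | S m => sumR m f + f m
  end.

Definition prodR (S : list nat) (g : nat -> R) : R :=
  fold_right (fun j acc => g j * acc) 1 S.

(* Setting: rays are 0..N-1; ray j belongs to position pos j (< L), so
   V_l = {j < N | pos j = l}.  js t (t >= 1) is the ray chosen at iteration t. *)

Fixpoint bvec (eps : nat -> R) (p : nat -> nat -> R) (js : nat -> nat)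
  (t : nat) (i : nat) : R :=
  match t with
  | O => eps i
  | S t' => bvec eps p js t' i * p i (js t)
  end.

Definition fval (V : nat) eps p js (t : nat) : R :=
  sumR V (fun i => bvec eps p js t i).

(* |J_l| after t iterations: number of s in 1..t with pos (js s) = l *)
Fixpoint Jcount (pos : nat -> nat) (js : nat -> nat) (t : nat) (l : nat) : nat :=
  match t with
  | O => O
  | S t' => (Jcount pos js t' l + (if Nat.eqb (pos (js t)) l then 1 else 0))%nat
  end.

Fixpoint inA (N : nat) (K : nat) (pos : nat -> nat) (js : nat -> nat)
  (t : nat) (j : nat) : Prop :=
  match t with
  | O => (j < N)%nat
  | S t' => inA N K pos js t' j /\ j <> js t /\
            ~ (Jcount pos js t (pos (js t)) = K /\ pos j = pos (js t))
  end.

(* the run js is a valid run of the multi-position greedy algorithm for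
   iterations 1..T (any tie-breaking in the argmin) *)
Definition greedy_run (V N K : nat) (pos : nat -> nat) (eps : nat -> R)
  (p : nat -> nat -> R) (js : nat -> nat) (T : nat) : Prop :=
  forall t : nat, (1 <= t <= T)%nat ->
    inA N K pos js (t - 1) (js t) /\
    forall j, inA N K pos js (t - 1) j ->
      sumR V (fun i => bvec eps p js (t - 1) i * p i (js t))
      <= sumR V (fun i => bvec eps p js (t - 1) i * p i j).

Definition gamma (L u : nat) : R :=
  (1 - exp (- (1 / INR L))) * (exp (- (1 / INR L))) ^ (L - 1 - u).

From Stdlib Require Import Reals Lra Lia Arith List.
Open Scope R_scope.

(* If [S] is a nonempty set of at most [LK] rays still available at step [t],
   then multiplying by all of [S] loses at most [|S|] times what the greedy ray
   loses, so the gap [f^t - OPT] shrinks by the factor [1 - 1/(LK)] at every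
   step.  Inside block [u] (iterations [uK .. uK+K-1]) the bound [OPT_u] is
   fixed, so the gap to [OPT_u] shrinks by [(1 - 1/(LK))^K <= e^(-1/L)] over
   the block; unrolling the [L] blocks gives the weights [gamma].  Since the
   [f^t] are nonincreasing, a block that starts below [OPT_u] stays there. *)

Lemma sumR_eq n f g : (forall i, (i < n)%nat -> f i = g i) -> sumR n f = sumR n g.
Proof.
  induction n as [|n IH]; intros H; simpl; [reflexivity|].
  rewrite IH, H by (try intros; try apply H; lia). reflexivity.
Qed.

Lemma sumR_le n f g : (forall i, (i < n)%nat -> f i <= g i) -> sumR n f <= sumR n g.
Proof.
  induction n as [|n IH]; intros H; simpl; [lra|].
  assert (sumR n f <= sumR n g) by (apply IH; intros; apply H; lia).
  assert (f n <= g n) by (apply H; lia).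
  lra.
Qed.

Lemma sumR_sub n f g : sumR n (fun i => f i - g i) = sumR n f - sumR n g.
Proof. induction n as [|n IH]; simpl; [lra|]. rewrite IH. lra. Qed.

Lemma sumR_scal_l n c f : sumR n (fun i => c * f i) = c * sumR n f.
Proof. induction n as [|n IH]; simpl; [lra|]. rewrite IH. lra. Qed.

Lemma prodR_unit_interval (S : list nat) (g : nat -> R) :
  (forall j, In j S -> 0 <= g j <= 1) -> 0 <= prodR S g <= 1.
Proof.
  induction S as [|j S IH]; intros H; unfold prodR; simpl; [lra|].
  assert (0 <= g j <= 1) by (apply H; left; reflexivity).
  assert (0 <= prodR S g <= 1) by (apply IH; intros; apply H; right; assumption).
  unfold prodR in *. split; nra.
Qed.

Lemma exp_pow x n : exp x ^ n = exp (INR n * x).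
Proof.
  induction n as [|n IH]; simpl.
  - rewrite Rmult_0_l, exp_0. reflexivity.
  - rewrite IH, <- exp_plus. f_equal. destruct n; simpl; lra.
Qed.

Lemma INR_ge_1 n : (1 <= n)%nat -> 1 <= INR n.
Proof. intros h. replace 1 with (INR 1) by reflexivity. apply le_INR, h. Qed.

Lemma one_sub_inv_nonneg M : 1 <= M -> 0 <= 1 - 1 / M.
Proof.
  intros hM. assert (1 / M <= 1).
  { unfold Rdiv. rewrite Rmult_1_l, <- Rinv_1. apply Rinv_le_contravar; lra. }
  lra.
Qed.

Lemma one_sub_inv_pow_le_exp (L K : nat) :
  (0 < L)%nat -> (0 < K)%nat ->
  (1 - 1 / INR (L * K)) ^ K <= exp (- (1 / INR L)).
Proof.
  intros hL hK.
  assert (0 < INR L) by (apply lt_0_INR; lia).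
  assert (0 < INR K) by (apply lt_0_INR; lia).
  assert (1 <= INR (L * K)) by (apply INR_ge_1; nia).
  assert (0 <= 1 - 1 / INR (L * K)) by (apply one_sub_inv_nonneg; assumption).
  apply Rle_trans with (exp (- (1 / INR (L * K))) ^ K).
  - apply pow_incr. split; [assumption|].
    pose proof (exp_ineq1_le (- (1 / INR (L * K)))). lra.
  - rewrite exp_pow, mult_INR. right. f_equal. field. lra.
Qed.

Lemma sumR_prod_loss_le (V : nat) (b : nat -> R) (p : nat -> nat -> R) (m : R)
    (X : list nat) :
  (forall i, (i < V)%nat -> 0 <= b i) ->
  (forall i j, (i < V)%nat -> In j X -> 0 <= p i j <= 1) ->
  (forall j, In j X -> m <= sumR V (fun i => b i * p i j)) ->
  sumR V b - sumR V (fun i => b i * prodR X (fun j => p i j))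
  <= INR (length X) * (sumR V b - m).
Proof.
  intros hb hp hm. induction X as [|j X IH].
  - rewrite (sumR_eq V (fun i => b i * prodR nil (fun j => p i j)) b)
      by (intros; unfold prodR; simpl; lra).
    simpl. lra.
  - assert (IHX := IH ltac:(intros; apply hp; simpl; auto)
                      ltac:(intros; apply hm; simpl; auto)).
    assert (hmj := hm j (or_introl eq_refl)).
    assert (hretain : sumR V (fun i => b i * p i j) <= sumR V b).
    { apply sumR_le. intros i hi.
      assert (0 <= p i j <= 1) by (apply hp; simpl; auto).
      assert (0 <= b i) by auto. nra. }
    (* (1 - p)(1 - P) >= 0 bounds the extra loss of [j] by its own loss *)
    assert (hextra : sumR V (fun i => b i * prodR X (fun j0 => p i j0)) -
                     sumR V (fun i => b i * prodR (j :: X) (fun j0 => p i j0))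
                     <= sumR V b - sumR V (fun i => b i * p i j)).
    { rewrite <- !sumR_sub. apply sumR_le. intros i hi.
      assert (0 <= prodR X (fun j0 => p i j0) <= 1)
        by (apply prodR_unit_interval; intros; apply hp; simpl; auto).
      assert (0 <= p i j <= 1) by (apply hp; simpl; auto).
      assert (0 <= b i) by auto.
      change (prodR (j :: X) (fun j0 => p i j0))
        with (p i j * prodR X (fun j0 => p i j0)).
      assert (0 <= b i * (1 - p i j) * (1 - prodR X (fun j0 => p i j0)))
        by (apply Rmult_le_pos; [apply Rmult_le_pos|]; lra).
      nra. }
    change (length (j :: X)) with (S (length X)). rewrite S_INR. nra.
Qed.

Lemma gap_contraction (n M f m g c : R) :
  1 <= n <= M -> m <= f -> g <= c -> f - g <= n * (f - m) ->
  m <= c + (1 - 1 / M) * (f - c).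
Proof.
  intros hn hmf hgc hloss.
  assert (hgap : f - c <= M * (f - m)) by nra.
  replace (c + (1 - 1 / M) * (f - c)) with (f - (f - c) / M) by (field; lra).
  assert ((f - c) / M <= f - m).
  { apply Rmult_le_reg_r with M; [lra|].
    unfold Rdiv. rewrite Rmult_assoc, Rinv_l by lra. lra. }
  lra.
Qed.

Lemma nonincreasing_le_first (y : nat -> R) (n : nat) :
  (forall k, (k < n)%nat -> y (S k) <= y k) -> y n <= y O.
Proof.
  induction n as [|n IH]; intros H; [lra|].
  assert (y (S n) <= y n) by (apply H; lia).
  assert (y n <= y O) by (apply IH; intros; apply H; lia).
  lra.
Qed.

Lemma contraction_pow_le (y : nat -> R) (c a : R) (n : nat) :
  0 <= a -> c <= y O ->
  (forall k, (k < n)%nat -> y (S k) <= y k /\ y (S k) <= c + a * (y k - c)) ->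
  y n <= c + a ^ n * (y O - c).
Proof.
  intros ha hc. induction n as [|n IH]; intros H; simpl; [lra|].
  destruct (H n ltac:(lia)) as [hmono hcontr].
  assert (IHn := IH ltac:(intros; apply H; lia)).
  assert (0 <= a ^ n) by (apply pow_le; assumption).
  destruct (Rlt_le_dec (y n) c); nra.
Qed.

Lemma contraction_block_le (y : nat -> R) (c a q : R) (K : nat) :
  0 <= a -> a ^ K <= q -> q <= 1 ->
  (forall k, (k < K)%nat -> y (S k) <= y k /\ y (S k) <= c + a * (y k - c)) ->
  y K <= q * y O + (1 - q) * c.
Proof.
  intros ha haq hq H.
  destruct (Rlt_le_dec (y O) c) as [hlt|hge].
  - assert (y K <= y O) by (apply nonincreasing_le_first; intros; apply H; assumption).
    nra.
  - assert (y K <= c + a ^ K * (y O - c)) by (apply contraction_pow_le; assumption).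
    nra.
Qed.

Lemma blockwise_contraction_le (x c : nat -> R) (q : R) (L K : nat) :
  0 <= q ->
  (forall u, (u < L)%nat -> x (u * K + K)%nat <= q * x (u * K)%nat + (1 - q) * c u) ->
  x (L * K)%nat <= q ^ L * x 0%nat + sumR L (fun u => (1 - q) * q ^ (L - 1 - u) * c u).
Proof.
  intros hq. induction L as [|L IH]; intros H; [simpl; lra|].
  assert (hlast := H L ltac:(lia)).
  assert (IHL := IH ltac:(intros; apply H; lia)).
  replace (S L * K)%nat with (L * K + K)%nat by lia.
  change (sumR (S L) ?f) with (sumR L f + f L).
  rewrite (sumR_eq L (fun u => (1 - q) * q ^ (S L - 1 - u) * c u)
                     (fun u => q * ((1 - q) * q ^ (L - 1 - u) * c u)))
    by (intros u hu; replace (S L - 1 - u)%nat with (S (L - 1 - u)) by lia; simpl; lra).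
  rewrite sumR_scal_l. replace (S L - 1 - L)%nat with O by lia. simpl. nra.
Qed.

Section GreedyRun.

Variables (V N K T : nat) (pos : nat -> nat) (eps : nat -> R)
  (p : nat -> nat -> R) (js : nat -> nat).
Hypothesis heps : forall i, (i < V)%nat -> 0 <= eps i <= 1.
Hypothesis hp : forall i j, (i < V)%nat -> (j < N)%nat -> 0 <= p i j <= 1.
Hypothesis hrun : greedy_run V N K pos eps p js T.

Lemma inA_lt t j : inA N K pos js t j -> (j < N)%nat.
Proof. revert j; induction t; simpl; intros j H; [assumption | apply IHt; tauto]. Qed.

Lemma greedy_run_step t : (t < T)%nat ->
  inA N K pos js t (js (S t)) /\
  forall j, inA N K pos js t j ->
    sumR V (fun i => bvec eps p js t i * p i (js (S t)))
    <= sumR V (fun i => bvec eps p js t i * p i j).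
Proof.
  intros ht. destruct (hrun (S t) ltac:(lia)) as [hin hmin].
  replace (S t - 1)%nat with t in hin, hmin by lia. split; assumption.
Qed.

Lemma bvec_unit_interval t i : (t <= T)%nat -> (i < V)%nat ->
  0 <= bvec eps p js t i <= 1.
Proof.
  induction t as [|t IH]; intros ht hi; simpl; [auto|].
  destruct (greedy_run_step t ltac:(lia)) as [hin _].
  assert (0 <= p i (js (S t)) <= 1) by (apply hp; [|apply (inA_lt t)]; assumption).
  assert (0 <= bvec eps p js t i <= 1) by (apply IH; lia).
  nra.
Qed.

Lemma greedy_step_contraction t (X : list nat) (c : R) :
  (t < T)%nat -> X <> nil -> (length X <= T)%nat ->
  (forall j, In j X -> inA N K pos js t j) ->
  sumR V (fun i => prodR X (fun j => p i j)) <= c ->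
  fval V eps p js (S t) <= fval V eps p js t /\
  fval V eps p js (S t) <= c + (1 - 1 / INR T) * (fval V eps p js t - c).
Proof.
  intros ht hne hlen hXA hXc.
  destruct (greedy_run_step t ht) as [hin hmin].
  set (b := bvec eps p js t).
  assert (hb : forall i, (i < V)%nat -> 0 <= b i <= 1)
    by (intros; apply bvec_unit_interval; [lia | assumption]).
  assert (hpX : forall i j, (i < V)%nat -> In j X -> 0 <= p i j <= 1)
    by (intros i j hi hj; apply hp; [|apply (inA_lt t), hXA]; assumption).
  change (fval V eps p js (S t)) with (sumR V (fun i => b i * p i (js (S t)))).
  change (fval V eps p js t) with (sumR V b).
  assert (hdecr : sumR V (fun i => b i * p i (js (S t))) <= sumR V b).
  { apply sumR_le. intros i hi.
    assert (0 <= p i (js (S t)) <= 1) by (apply hp; [|apply (inA_lt t)]; assumption).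
    assert (0 <= b i <= 1) by auto. nra. }
  assert (hXval : sumR V (fun i => b i * prodR X (fun j => p i j)) <= c).
  { eapply Rle_trans; [|exact hXc]. apply sumR_le. intros i hi.
    assert (0 <= prodR X (fun j => p i j) <= 1)
      by (apply prodR_unit_interval; intros; apply hpX; assumption).
    assert (0 <= b i <= 1) by auto. nra. }
  assert (hcard : 1 <= INR (length X) <= INR T).
  { split; [|apply le_INR; assumption].
    destruct X as [|j X']; [congruence|].
    change (length (j :: X')) with (S (length X')).
    rewrite S_INR. pose proof (pos_INR (length X')). lra. }
  split; [exact hdecr|].
  eapply gap_contraction; [exact hcard | exact hdecr | exact hXval |].
  apply sumR_prod_loss_le; [intros; apply hb; assumption | exact hpX |].
  intros j hj. apply hmin, hXA, hj.
Qed.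

End GreedyRun.

Theorem theorem2
  (V K L N : nat) (pos : nat -> nat) (eps : nat -> R) (p : nat -> nat -> R)
  (js : nat -> nat) (OPT : nat -> R)
  (hV : (0 < V)%nat) (hK : (0 < K)%nat) (hL : (0 < L)%nat)
  (heps : forall i, (i < V)%nat -> 0 <= eps i <= 1)
  (hpos : forall j, (j < N)%nat -> (pos j < L)%nat)
  (hsize : forall l, (l < L)%nat ->
     (K <= length (filter (fun j => Nat.eqb (pos j) l) (seq 0 N)))%nat)
  (hp : forall i j, (i < V)%nat -> (j < N)%nat -> 0 <= p i j <= 1)
  (hrun : greedy_run V N K pos eps p js (L * K))
  (hOPTmono : forall u, (S u < L)%nat -> OPT u <= OPT (S u))
  (hOPT : forall t, (t < L * K)%nat ->
     exists S : list nat,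
       S <> nil /\ NoDup S /\ (length S <= L * K)%nat /\
       (forall j, In j S -> inA N K pos js t j) /\
       sumR V (fun i => prodR S (fun j => p i j)) <= OPT (t / K)%nat) :
  fval V eps p js (L * K)
  <= sumR V eps / exp 1 + sumR L (fun u => gamma L u * OPT u).
Proof.
  set (q := exp (- (1 / INR L))).
  assert (hLpos : 0 < INR L) by (apply lt_0_INR; lia).
  assert (hq0 : 0 <= q) by (left; apply exp_pos).
  assert (hq1 : q <= 1).
  { rewrite <- exp_0. left. apply exp_increasing.
    assert (0 < 1 / INR L) by (apply Rdiv_lt_0_compat; lra). lra. }
  assert (hqL : q ^ L = / exp 1)
    by (unfold q; rewrite exp_pow, <- exp_Ropp; f_equal; field; lra).
  assert (hblocks := blockwise_contraction_le (fval V eps p js) OPT q L K hq0).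
  rewrite hqL in hblocks.
  unfold Rdiv. rewrite Rmult_comm.
  apply hblocks. intros u hu.
  pose proof (contraction_block_le (fun k => fval V eps p js (u * K + k)%nat)
    (OPT u) (1 - 1 / INR (L * K)) q K) as hblock.
  cbv beta in hblock. rewrite Nat.add_0_r in hblock. apply hblock;
    [| apply one_sub_inv_pow_le_exp; assumption | assumption |].
  - apply one_sub_inv_nonneg, INR_ge_1. nia.
  - intros k hk.
    assert (hdiv : ((u * K + k) / K)%nat = u)
      by (rewrite Nat.div_add_l, Nat.div_small by lia; lia).
    destruct (hOPT (u * K + k)%nat ltac:(nia)) as [X [hne [_ [hlen [hXA hXc]]]]].
    rewrite hdiv in hXc. rewrite Nat.add_succ_r.
    apply (greedy_step_contraction V N K (L * K) pos eps p js heps hp hrun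
             (u * K + k)%nat X); auto; nia.
Qed.
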